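(* Let $n\ge 2$ and $w\in\widetilde{S}_n^\circ$ with gap vector $\dot g(w)=(g_1,\dots,g_{n-1})$. Then the Coxeter length of $w$ is \[\ell(w)=\sum_{i=1}^{n-1}(n-i)\,g_i = g_{n-1}+2g_{n-2}+\cdots+(n-1)g_1 .\]
   Context: An affine permutation of size $n$ is a bijection $w:\mathbb{Z}\to\mathbb{Z}$ with $w(i+n)=w(i)+n$ for all $i$ and $w(1)+\cdots+w(n)=\binom{n+1}{2}$; $[w(1),\dots,w(n)]$ is its base window. The affine symmetric group $\widetilde{S}_n$ is the group of these under composition. It is generated by $s_0,\dots,s_{n-1}$, where $ws_i$ is obtained from $w$ by swapping the values at positions $i+mn$ and $i+1+mn$ for every $m\in\mathbb{Z}$; the Coxeter length $\ell(w)$ is the minimal number of such generators in a factorization of $w$. Let $\widetilde{S}_n^\circ$ be the set of $w\in\widetilde{S}_n$ with $w(1)<w(2)<\cdots<w(n)$ (minimal length coset representatives). For $w\in\widetilde{S}_n^\circ$ with base window $w_1<\cdots<w_n$, call an integer a bead if it equals $w_j-mn$ for some $1\le j\le n$ and some integer $m\ge 0$, and a gap otherwise. The gap vector is $\dot g(w)=(g_1,\dots,g_{n-1})$, where $g_i$ is the number of gaps strictly between $w_i$ and $w_{i+1}$. *)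

From Stdlib Require Import ZArith List Lia Bool.
Import ListNotations.
Open Scope Z_scope.

Definition is_affine_perm (n : nat) (w : Z -> Z) : Prop :=
  (forall x y, w x = w y -> x = y) /\
  (forall y, exists x, w x = y) /\
  (forall i, w (i + Z.of_nat n) = w i + Z.of_nat n) /\
  fold_right Z.add 0 (map (fun k => w (Z.of_nat k)) (seq 1 n))
    = Z.of_nat n * (Z.of_nat n + 1) / 2.

Definition gen (n : nat) (i : nat) (j : Z) : Z :=
  let N := Z.of_nat n in
  if Z.eqb (j mod N) (Z.of_nat i mod N) then j + 1
  else if Z.eqb (j mod N) ((Z.of_nat i + 1) mod N) then j - 1
  else j.

(* the product s_{i1} s_{i2} ... s_{ik} (composition of functions);
   note w s_i = w o gen n i swaps the values of w at positions i+mn, i+1+mn *)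
Definition gen_prod (n : nat) (l : list nat) : Z -> Z :=
  fold_right (fun i f => fun z => gen n i (f z)) (fun z => z) l.

Definition is_factorization (n : nat) (w : Z -> Z) (l : list nat) : Prop :=
  Forall (fun i => (i < n)%nat) l /\ forall z, w z = gen_prod n l z.

Definition coxeter_length_is (n : nat) (w : Z -> Z) (k : nat) : Prop :=
  (exists l, is_factorization n w l /\ length l = k) /\
  (forall l, is_factorization n w l -> (k <= length l)%nat).

(* minimal length coset representatives: w(1) < ... < w(n) *)
Definition window_increasing (n : nat) (w : Z -> Z) : Prop :=
  forall i : nat, (1 <= i)%nat -> (i < n)%nat -> w (Z.of_nat i) < w (Z.of_nat i + 1).

Definition is_bead (n : nat) (w : Z -> Z) (x : Z) : Prop :=
  exists (j : nat) (m : Z), (1 <= j <= n)%nat /\ 0 <= m /\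
    x = w (Z.of_nat j) - m * Z.of_nat n.

(* boolean version (literal unfolding: m = (w_j - x)/n) *)
Definition is_beadb (n : nat) (w : Z -> Z) (x : Z) : bool :=
  existsb (fun j => Z.leb x (w (Z.of_nat j)) &&
                    Z.eqb ((w (Z.of_nat j) - x) mod Z.of_nat n) 0)
          (seq 1 n).

Lemma is_beadb_spec n w x : (n > 0)%nat -> is_beadb n w x = true <-> is_bead n w x.
Proof.
  intros Hn. unfold is_beadb, is_bead. rewrite existsb_exists. split.
  - intros [j [Hj Hb]]. apply in_seq in Hj.
    apply andb_true_iff in Hb as [H1 H2]. apply Z.leb_le in H1. apply Z.eqb_eq in H2.
    exists j, ((w (Z.of_nat j) - x) / Z.of_nat n). split; [lia|].
    assert (HN : Z.of_nat n > 0) by lia.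
    pose proof (Z.div_mod (w (Z.of_nat j) - x) (Z.of_nat n) ltac:(lia)) as E.
    split. apply Z.div_pos; lia. rewrite H2 in E. lia.
  - intros [j [m [Hj [Hm Hx]]]]. exists j. split. apply in_seq; lia.
    apply andb_true_iff; split. apply Z.leb_le. nia.
    apply Z.eqb_eq. subst x.
    replace (w (Z.of_nat j) - (w (Z.of_nat j) - m * Z.of_nat n)) with (m * Z.of_nat n) by ring.
    apply Z.mod_mul. lia.
Qed.

Definition Zbetween (a b : Z) : list Z :=
  map (fun k => a + 1 + Z.of_nat k) (seq 0 (Z.to_nat (b - a - 1))).

Definition gap (n : nat) (w : Z -> Z) (i : nat) : nat :=
  length (filter (fun x => negb (is_beadb n w x))
    (Zbetween (w (Z.of_nat i)) (w (Z.of_nat i + 1)))).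

Definition weighted_gap_sum (n : nat) (w : Z -> Z) : nat :=
  fold_right Nat.add 0%nat (map (fun i => ((n - i) * gap n w i)%nat) (seq 1 (n - 1))).

(* The Coxeter length of an affine permutation w is its number of affine inversions, the pairs
   (x, z) with x in a fixed window of n consecutive integers, x < z and w z < w x: multiplying w
   on the right by s_i changes this count by exactly one, up or down according to whether
   w i < w (i + 1), and an affine permutation with no such descent is the identity.
   When w 1 < ... < w n, the inversions (j, k + m n) with k < j correspond to the integers x in
   (w k, w j) congruent to w k modulo n.  Such an x lies in an interval (w i, w (i + 1)) with
   k <= i, where it is a gap because the largest bead of its class, w k, lies below it; and it
   is counted once for each of the n - i indices j > i. *)

Set Warnings "-notation-overridden".
From Stdlib Require Import ZArith List Lia.
From HB Require Import structures.
From mathcomp Require Import all_boot zify.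
From mathcomp Require Import fingroup perm.
Open Scope Z_scope.

Lemma mod_eqb_near (N a b : Z) : -N < a - b < N -> (a mod N =? b mod N) = (a =? b).
Proof.
move=> ab; case: (Z.eqb_spec a b) => [->|neq]; first exact: Z.eqb_refl.
apply/Z.eqb_neq => eq_mod; apply: neq.
have N_gt0 : 0 < N by lia.
have ab_mul : a - b = N * (a / N - b / N).
  have := Z.div_mod a N ltac:(lia); have := Z.div_mod b N ltac:(lia); lia.
have [k_neg|[k0|k_pos]] := Z.lt_total (a / N - b / N) 0; nia.
Qed.

Lemma opp_mod_eqb0_dvdn (d m : nat) : (0 < d)%N ->
  ((- Z.of_nat m) mod Z.of_nat d =? 0) = (d %| m)%N.
Proof.
move=> d_gt0; case: (Z.eqb_spec _ 0) => [/Z.mod_divide [|k mk] | nd]; first lia.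
  by apply/esym/dvdnP; exists (Z.to_nat (- k)); nia.
apply/esym/negbTE/dvdnP => -[k mk]; apply: nd; apply/Z.mod_divide; first lia.
by exists (- Z.of_nat k); rewrite mk; lia.
Qed.

(* The number of integers [m] with [E < m N < D], for [N > 0]. *)
Definition floor_count (N D E : Z) : nat := Z.to_nat ((D - 1) / N - E / N).

Lemma floor_count_adjacent N D : 2 <= N -> D mod N <> 0 ->
  if 0 <? D
  then (floor_count N D (-1) + floor_count N (- D) 1
          = (floor_count N D 1 + floor_count N (- D) (-1)).+1)%N
  else ((floor_count N D (-1) + floor_count N (- D) 1).+1
          = floor_count N D 1 + floor_count N (- D) (-1))%N.
Proof.
move=> N_ge2 D_mod; rewrite /floor_count.
have := Z.div_mod D N ltac:(lia); have := Z.mod_pos_bound D N ltac:(lia) => D_bd D_eq.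
have -> : (D - 1) / N = D / N by symmetry; apply: (Z.div_unique _ _ _ (D mod N - 1)); lia.
have -> : (- D - 1) / N = - (D / N) - 1.
  by symmetry; apply: (Z.div_unique _ _ _ (N - D mod N - 1)); lia.
have -> : 1 / N = 0 by apply: Z.div_small; lia.
have -> : -1 / N = -1 by symmetry; apply: (Z.div_unique _ _ _ (N - 1)); lia.
case: Z.ltb_spec => D_sgn.
- have : 0 <= D / N by apply: Z.div_pos; lia.
  lia.
- have D_neg : D < 0 by case: (Z.eq_dec D 0) D_mod => [->|]; [rewrite Zmod_0_l|]; lia.
  have : D / N < 0 by apply: Z.div_lt_upper_bound; lia.
  lia.
Qed.

#[warnings="-redundant-canonical-projection"]
HB.instance Definition _ := Monoid.isComLaw.Build Z 0 Z.add Z.add_assoc Z.add_comm Z.add_0_l.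

Lemma List_map_seq (T : Type) (f : nat -> T) s m : List.map f (List.seq s m) = map f (iota s m).
Proof. by elim: m s => [|m IHm] s //=; rewrite IHm. Qed.

Lemma fold_right_big (R : Type) (idx : R) (op : Monoid.law idx) (F : nat -> R) s m :
  fold_right op idx (List.map F (List.seq s m)) = \big[op/idx]_(j < m) F (s + j)%N.
Proof.
elim: m s => [|m IHm] s; first by rewrite big_ord0.
rewrite /= big_ord_recl addn0 IHm; congr (op _ _).
by apply: eq_bigr => j _; rewrite lift0 addSnnS.
Qed.

Lemma length_filter_count (T : Type) (p : pred T) (l : seq T) :
  length (List.filter p l) = count p l.
Proof. by elim: l => //= x l IHl; case: (p x) => /=; rewrite IHl. Qed.

Lemma count_sum_pointwise (T : Type) (p : pred T) (q : nat -> pred T) (l : seq T) a b :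
  (forall x, List.In x l -> p x = \sum_(a <= k < b) q k x :> nat) ->
  count p l = \sum_(a <= k < b) count (q k) l.
Proof.
elim: l => [|x l IHl] pq /=; first by rewrite big1.
by rewrite big_split /= -IHl => [|y y_in]; [rewrite pq //; left | apply: pq; right].
Qed.

Lemma big_window_step (R : Type) (idx : R) (op : Monoid.law idx) n (H : Z -> R) a :
  op (H a) (\big[op/idx]_(j < n) H (a + 1 + Z.of_nat j)) =
  op (\big[op/idx]_(j < n) H (a + Z.of_nat j)) (H (a + Z.of_nat n)).
Proof.
transitivity (\big[op/idx]_(j < n.+1) H (a + Z.of_nat j)); last by rewrite big_ord_recr.
rewrite big_ord_recl Z.add_0_r; congr (op _ _).
by apply: eq_bigr => j _; rewrite lift0; congr H; lia.
Qed.

Lemma big_agree_off2 (T : finType) (F G : T -> nat) (p1 p2 : T) : p1 != p2 ->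
  (forall p, p != p1 -> p != p2 -> F p = G p) ->
  (\sum_p F p + (G p1 + G p2) = \sum_p G p + (F p1 + F p2))%N.
Proof.
move=> p12 FG; rewrite (bigD1 p1) // (bigD1 p2) 1?eq_sym //=.
rewrite [in RHS](bigD1 p1) // [in RHS](bigD1 p2) 1?eq_sym //=.
rewrite (eq_bigr G) => [|p /andP [? ?]]; last exact: FG.
lia.
Qed.

Lemma exchange_big_triangle (F : nat -> nat -> nat) a b :
  \sum_(a <= i < b) \sum_(i <= j < b) F i j = \sum_(a <= j < b) \sum_(a <= i < j.+1) F i j.
Proof.
elim: b => [|b IHb]; first by rewrite !big_geq.
case: (leqP a b) => [ab | ba]; last by rewrite !big_geq.
rewrite [RHS]big_nat_recr //= -IHb big_nat_recr //= big_nat1 [in RHS]big_nat_recr //=.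
rewrite (eq_big_nat _ _ (F2 := fun i => \sum_(i <= j < b) F i j + F i b)%N); last first.
  by move=> i /andP [_ ib]; rewrite big_nat_recr //; lia.
by rewrite big_split /= addnA.
Qed.

Lemma sum_weighted_triangle (c : nat -> nat -> nat) m :
  (\sum_(1 <= j < m.+1) \sum_(1 <= k < j) \sum_(k <= i < j) c i k =
   \sum_(1 <= i < m) (m - i) * \sum_(1 <= k < i.+1) c i k)%N.
Proof.
under eq_bigr => j _ do rewrite (exchange_big_triangle (fun k i => c i k)).
case: m => [|m]; first by rewrite !big_geq.
rewrite big_add1 /= big_ltn // big_geq // add0n.
rewrite -(exchange_big_triangle (fun i _ => \sum_(1 <= k < i.+1) c i k)).
by apply: eq_bigr => i _; rewrite sum_nat_const_nat.
Qed.

Definition swap01 (j : nat) : nat := if j == 0%N then 1%N else if j == 1%N then 0%N else j.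

Lemma swap01K : involutive swap01.
Proof. by case=> [|[|j]]. Qed.

Lemma swap01_lt n j : (1 < n)%N -> (j < n)%N -> (swap01 j < n)%N.
Proof. by rewrite /swap01; case: j => [|[|j]] /=; lia. Qed.

Lemma swap01_ltn j k : ~~ ((j == 0%N) && (k == 1%N)) -> ~~ ((j == 1%N) && (k == 0%N)) ->
  (swap01 j < swap01 k)%N = (j < k)%N.
Proof. by case: j k => [|[|j]] [|[|k]]. Qed.

Lemma big_swap01 (R : Type) (idx : R) (op : Monoid.com_law idx) n (H : nat -> R) :
  (1 < n)%N -> \big[op/idx]_(j < n) H (swap01 j) = \big[op/idx]_(j < n) H j.
Proof.
move=> n_gt1; pose s := tperm (Ordinal (ltnW n_gt1)) (Ordinal n_gt1).
rewrite [RHS](reindex_inj (@perm_inj _ s)); apply: eq_bigr => j _; congr H.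
rewrite /swap01; case: tpermP => [->|->|ne0 ne1] //=.
case: eqP => [j0|_]; first by case: ne0; exact: val_inj.
by case: eqP => [j1|_] //; case: ne1; exact: val_inj.
Qed.

Section Periodic.
Variables (N : Z) (f : Z -> Z).
Hypothesis f_addN : forall z, f (z + N) = f z + N.

Lemma periodic_addmN m z : f (z + m * N) = f z + m * N.
Proof.
elim/Z.peano_ind: m z => [|m IHm|m IHm] z; first by rewrite !Z.add_0_r.
- by rewrite (_ : z + Z.succ m * N = z + m * N + N) ?f_addN ?IHm; lia.
- have := f_addN (z + Z.pred m * N); rewrite (_ : _ + N = z + m * N) ?IHm; lia.
Qed.

End Periodic.

Lemma window_decomp (n : nat) (a z : Z) : (0 < n)%N ->
  exists (j : nat) (q : Z), (j < n)%N /\ z = a + Z.of_nat j + q * Z.of_nat n.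
Proof.
move=> n_gt0; exists (Z.to_nat ((z - a) mod Z.of_nat n)), ((z - a) / Z.of_nat n).
have := Z.div_mod (z - a) (Z.of_nat n) ltac:(lia).
have := Z.mod_pos_bound (z - a) (Z.of_nat n) ltac:(lia); lia.
Qed.

Section WindowSum.
Variable n : nat.
Local Notation N := (Z.of_nat n).

Definition window_sum (f : Z -> Z) (a : Z) : Z := \big[Z.add/0]_(j < n) f (a + Z.of_nat j).

Lemma window_sum_add f a m : (forall z, f (z + N) = f z + N) ->
  window_sum f (a + m) = window_sum f a + m * N.
Proof.
move=> f_addN; elim/Z.peano_ind: m => [|m IHm|m IHm]; first by rewrite !Z.add_0_r.
- have /= := big_window_step _ _ Z.add n f (a + m).
  rewrite f_addN -/(window_sum f (a + m + 1)) -/(window_sum f (a + m)).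
  by rewrite (_ : a + Z.succ m = a + m + 1); nia.
- have /= := big_window_step _ _ Z.add n f (a + Z.pred m).
  rewrite f_addN -/(window_sum f (a + Z.pred m + 1)) -/(window_sum f (a + Z.pred m)).
  by rewrite (_ : a + Z.pred m + 1 = a + m); nia.
Qed.

End WindowSum.

Section Generators.
Variable n : nat.
Hypothesis n_ge2 : (2 <= n)%N.
Local Notation N := (Z.of_nat n).

Lemma gen_addN i z : gen n i (z + N) = gen n i z + N.
Proof.
rewrite /gen /= (_ : z + N = z + 1 * N) ?Z_mod_plus_full; last lia.
by case: ifP => _; [|case: ifP => _]; lia.
Qed.

Lemma gen_window i j : (i < n)%N -> (j < n)%N ->
  gen n i (Z.of_nat i + Z.of_nat j) = Z.of_nat i + Z.of_nat (swap01 j).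
Proof.
move=> i_lt j_lt; rewrite /gen /= !mod_eqb_near; try lia.
by case: j j_lt => [|[|j]] j_lt; rewrite /swap01 /=;
  do 2?[case: Z.eqb_spec => ? /=]; lia.
Qed.

Lemma gen_involutive i : (i < n)%N -> involutive (gen n i).
Proof.
move=> i_lt z; have [j [q [j_lt ->]]] := window_decomp n (Z.of_nat i) z ltac:(lia).
rewrite !(periodic_addmN _ _ (gen_addN i)) !gen_window ?swap01K //.
exact: swap01_lt.
Qed.

End Generators.

Definition affine_injection (n : nat) (w : Z -> Z) : Prop :=
  injective w /\ forall z, w (z + Z.of_nat n) = w z + Z.of_nat n.

Lemma affine_injection_comp n u v :
  affine_injection n u -> affine_injection n v -> affine_injection n (u \o v).
Proof.
move=> [u_inj u_addN] [v_inj v_addN]; split; first exact: inj_comp.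
by move=> z /=; rewrite v_addN u_addN.
Qed.

Lemma gen_affine_injection n i : (2 <= n)%N -> (i < n)%N -> affine_injection n (gen n i).
Proof.
move=> n_ge2 i_lt; split; first exact/can_inj/gen_involutive.
exact: gen_addN.
Qed.

Lemma affine_perm_injection n w : is_affine_perm n w -> affine_injection n w.
Proof. by move=> [w_inj [_ [w_addN _]]]. Qed.

Lemma affine_injection_mod n w x y : (0 < n)%N -> affine_injection n w ->
  (w x - w y) mod Z.of_nat n = 0 -> (x - y) mod Z.of_nat n = 0.
Proof.
move=> n_gt0 [w_inj w_addN] /Z.mod_divide [|q wq]; first lia.
have: w x = w (y + q * Z.of_nat n) by rewrite (periodic_addmN _ _ w_addN); lia.
move/w_inj ->; rewrite (_ : y + _ - y = q * Z.of_nat n); last lia.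
exact: Z_mod_mult.
Qed.

Section Inversions.
Variable n : nat.
Hypothesis n_ge2 : (2 <= n)%N.
Local Notation N := (Z.of_nat n).

(* Counts the inversions [(x, y + m n)] of [w]: [x < y + m n] and [w (y + m n) < w x]. *)
Definition affine_inv (w : Z -> Z) (x y : Z) : nat := floor_count N (w x - w y) (x - y).

Definition window_inv (w : Z -> Z) (a : Z) : nat :=
  \sum_(j < n) \sum_(k < n) affine_inv w (a + Z.of_nat j) (a + Z.of_nat k).

Definition inversion_number (w : Z -> Z) : nat := window_inv w 1.

Lemma window_div j k : (j < n)%N -> (k < n)%N ->
  (Z.of_nat j - Z.of_nat k) / N = if (j < k)%N then -1 else 0.
Proof.
move=> j_lt k_lt; symmetry; case: ifP => jk.
- by apply: (Z.div_unique _ _ _ (N + Z.of_nat j - Z.of_nat k)); lia.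
- by apply: (Z.div_unique _ _ _ (Z.of_nat j - Z.of_nat k)); lia.
Qed.

Section AffineInjection.
Variable w : Z -> Z.
Hypothesis w_aff : affine_injection n w.

Lemma affine_inv_addN_l x y : affine_inv w (x + N) y = affine_inv w x y.
Proof.
rewrite /affine_inv /floor_count (proj2 w_aff).
rewrite (_ : w x + N - w y - 1 = w x - w y - 1 + 1 * N) ?Z.div_add; try lia.
by rewrite (_ : x + N - y = x - y + 1 * N) ?Z.div_add; try lia; congr Z.to_nat; lia.
Qed.

Lemma affine_inv_addN_r x y : affine_inv w x (y + N) = affine_inv w x y.
Proof.
rewrite /affine_inv /floor_count (proj2 w_aff).
rewrite (_ : w x - (w y + N) - 1 = w x - w y - 1 + -1 * N) ?Z.div_add; try lia.
by rewrite (_ : x - (y + N) = x - y + -1 * N) ?Z.div_add; try lia; congr Z.to_nat; lia.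
Qed.

Lemma window_inv_succ a : window_inv w (a + 1) = window_inv w a.
Proof.
have step (H : Z -> nat) b : H (b + N) = H b ->
    \sum_(j < n) H (b + 1 + Z.of_nat j)%Z = \sum_(j < n) H (b + Z.of_nat j)%Z.
  by move=> Hper; apply/(@addnI (H b)); rewrite [LHS]big_window_step Hper addnC.
rewrite /window_inv (step (fun x => \sum_(k < n) affine_inv w x (a + 1 + Z.of_nat k)%Z)).
  apply: eq_bigr => j _; apply: (step (affine_inv w _)); exact: affine_inv_addN_r.
by apply: eq_bigr => k _; exact: affine_inv_addN_l.
Qed.

Lemma window_inv_shift a : window_inv w a = inversion_number w.
Proof.
rewrite -(Zplus_minus 1 a); elim/Z.peano_ind: (a - 1) => [|m IHm|m IHm].
- by rewrite Z.add_0_r.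
- by rewrite (_ : 1 + Z.succ m = 1 + m + 1) ?window_inv_succ; last lia.
- by rewrite -window_inv_succ (_ : 1 + Z.pred m + 1 = 1 + m); last lia.
Qed.

(* Reindexing by the transposition changes only the terms of the pairs (0, 1) and (1, 0). *)
Lemma window_inv_swap01 v a :
  (forall j, (j < n)%N -> v (a + Z.of_nat j) = w (a + Z.of_nat (swap01 j))) ->
  if w a <? w (a + 1) then window_inv v a = (window_inv w a).+1
  else (window_inv v a).+1 = window_inv w a.
Proof.
move=> v_swap; pose o0 : 'I_n := Ordinal (ltnW n_ge2); pose o1 : 'I_n := Ordinal n_ge2.
pose D (j k : nat) := w (a + Z.of_nat (swap01 j)) - w (a + Z.of_nat (swap01 k)).
pose F (p : 'I_n * 'I_n) := floor_count N (D p.1 p.2) (Z.of_nat p.1 - Z.of_nat p.2).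
pose G (p : 'I_n * 'I_n) :=
  floor_count N (D p.1 p.2) (Z.of_nat (swap01 p.1) - Z.of_nat (swap01 p.2)).
have v_sum : window_inv v a = \sum_p F p.
  rewrite /window_inv pair_big; apply: eq_bigr => -[j k] _.
  by rewrite /F /D /affine_inv /= !v_swap //; congr floor_count; lia.
have w_sum : window_inv w a = \sum_p G p.
  transitivity (\sum_(j < n) \sum_(k < n)
                 affine_inv w (a + Z.of_nat (swap01 j)) (a + Z.of_nat (swap01 k))).
    rewrite /window_inv -(big_swap01 _ _ _ _
      (fun j => \sum_(k < n) affine_inv w (a + Z.of_nat j) (a + Z.of_nat k))) //.
    apply: eq_bigr => j _; symmetry.
    exact: (big_swap01 _ _ _ _ (fun k => affine_inv w _ (a + Z.of_nat k))).
  rewrite pair_big; apply: eq_bigr => -[j k] _.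
  by rewrite /G /D /affine_inv /=; congr floor_count; lia.
have FG p : p != (o0, o1) -> p != (o1, o0) -> F p = G p.
  case: p => j k ne01 ne10; rewrite /F /G /floor_count /=.
  rewrite (window_div j k) // (window_div (swap01 j) (swap01 k)); try exact: swap01_lt.
  by rewrite swap01_ltn.
have := big_agree_off2 _ F G (o0, o1) (o1, o0) isT FG.
rewrite -v_sum -w_sum /F /G /D /= Z.add_0_r.
have D_mod : (w (a + 1) - w a) mod N <> 0.
  move/(affine_injection_mod _ _ _ _ (ltnW n_ge2) w_aff).
  by rewrite Z.add_simpl_l Z.mod_small; lia.
have := floor_count_adjacent N (w (a + 1) - w a) ltac:(lia) D_mod.
rewrite (_ : - (w (a + 1) - w a) = w a - w (a + 1)); last lia.
by do 2!case: Z.ltb_spec; lia.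
Qed.

End AffineInjection.

Lemma inversion_number_ext w v : w =1 v -> inversion_number w = inversion_number v.
Proof.
by move=> wv; apply: eq_bigr => j _; apply: eq_bigr => k _; rewrite /affine_inv !wv.
Qed.

Lemma inversion_number_id : inversion_number id = 0%N.
Proof.
apply: big1 => j _; apply: big1 => k _; rewrite /affine_inv /floor_count /=.
set d := 1 + Z.of_nat j - _; have : (d - 1) / N <= d / N by apply: Z.div_le_mono; lia.
lia.
Qed.

Lemma inversion_number_gen w i : affine_injection n w -> (i < n)%N ->
  if w (Z.of_nat i) <? w (Z.of_nat i + 1)
  then inversion_number (w \o gen n i) = (inversion_number w).+1
  else (inversion_number (w \o gen n i)).+1 = inversion_number w.
Proof.
move=> w_aff i_lt.
have wg_aff := affine_injection_comp _ _ _ w_aff (gen_affine_injection _ _ n_ge2 i_lt).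
rewrite -(window_inv_shift _ w_aff (Z.of_nat i)) -(window_inv_shift _ wg_aff (Z.of_nat i)).
by apply: window_inv_swap01 => // j j_lt /=; rewrite gen_window.
Qed.

Lemma gen_prod_affine_injection l : Forall (fun i => (i < n)%coq_nat) l ->
  affine_injection n (gen_prod n l).
Proof.
elim: l => [_|i l IHl /Forall_cons_iff [/ltP i_lt /IHl l_aff]]; first by split.
exact: (affine_injection_comp _ _ _ (gen_affine_injection _ _ n_ge2 i_lt) l_aff).
Qed.

Lemma gen_prod_rcons l i : gen_prod n (l ++ [:: i]) =1 gen_prod n l \o gen n i.
Proof. by elim: l => [|j l IHl] z //=; rewrite IHl. Qed.

Lemma inversion_number_gen_prod_le l : Forall (fun i => (i < n)%coq_nat) l ->
  (inversion_number (gen_prod n l) <= length l)%N.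
Proof.
elim/rev_ind: l => [_|i l IHl /Forall_app [l_lt /Forall_cons_iff [/ltP i_lt _]]].
  by rewrite (inversion_number_ext _ id) ?inversion_number_id.
rewrite (inversion_number_ext _ _ (gen_prod_rcons l i)) length_app /=.
have := inversion_number_gen _ i (gen_prod_affine_injection l l_lt) i_lt.
by have := IHl l_lt; case: (_ <? _) => /=; lia.
Qed.

End Inversions.

Section AffinePermutations.
Variable n : nat.
Hypothesis n_ge2 : (2 <= n)%N.
Local Notation N := (Z.of_nat n).

Lemma fold_right_window_sum (w : Z -> Z) :
  fold_right Z.add 0 (List.map (fun k => w (Z.of_nat k)) (List.seq 1 n)) = window_sum n w 1.
Proof. by rewrite fold_right_big; apply: eq_bigr => j _; congr w; lia. Qed.

Lemma window_sum_id : window_sum n id 1 = N * (N + 1) / 2.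
Proof.
have gauss m : \big[Z.add/0]_(j < m) (1 + Z.of_nat j) * 2 = Z.of_nat m * (Z.of_nat m + 1).
  elim: m => [|m IHm]; first by rewrite big_ord0.
  have -> : \big[Z.add/0]_(j < m.+1) (1 + Z.of_nat j) =
            \big[Z.add/0]_(j < m) (1 + Z.of_nat j) + (1 + Z.of_nat m) by exact: big_ord_recr.
  lia.
by rewrite -gauss Z.div_mul.
Qed.

Lemma affine_perm_window_sum w : is_affine_perm n w -> window_sum n w 1 = window_sum n id 1.
Proof. by move=> [_ [_ [_]]]; rewrite fold_right_window_sum window_sum_id. Qed.

Lemma is_affine_perm_gen w i : is_affine_perm n w -> (i < n)%N ->
  is_affine_perm n (w \o gen n i).
Proof.
move=> w_perm i_lt; have gen_aff := gen_affine_injection _ _ n_ge2 i_lt.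
have [wg_inj wg_addN] := affine_injection_comp _ _ _ (affine_perm_injection _ _ w_perm) gen_aff.
have [_ [w_surj [w_addN _]]] := w_perm.
split; first exact: wg_inj; split.
  by move=> y; have [x <-] := w_surj y; exists (gen n i x); rewrite /= gen_involutive.
split; first exact: wg_addN.
rewrite fold_right_window_sum -window_sum_id -(affine_perm_window_sum _ w_perm).
rewrite -(Zplus_minus (Z.of_nat i) 1) !window_sum_add //; congr Z.add.
rewrite /window_sum -(big_swap01 _ _ _ _ (fun j => w (Z.of_nat i + Z.of_nat j))) //.
by apply: eq_bigr => j _ /=; rewrite gen_window.
Qed.

(* Ascents force [w k = w 0 + k] on [0, n]; the sum condition then forces [w 0 = 0]. *)
Lemma affine_perm_ascending_id w : is_affine_perm n w ->
  (forall i, (i < n)%N -> w (Z.of_nat i) < w (Z.of_nat i + 1)) -> w =1 id.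
Proof.
move=> w_perm w_asc; have [_ [_ [w_addN _]]] := w_perm.
have grow j k : (j <= k <= n)%N -> w (Z.of_nat j) + Z.of_nat (k - j) <= w (Z.of_nat k).
  elim: k => [|k IHk] /andP [jk kn]; first by rewrite (_ : j = 0%N); lia.
  case: (eqVneq j k.+1) => [-> | ne]; first by rewrite subnn; lia.
  have := IHk ltac:(lia); have := w_asc k ltac:(lia).
  by rewrite (_ : Z.of_nat k.+1 = Z.of_nat k + 1); lia.
have wE k : (k <= n)%N -> w (Z.of_nat k) = w 0 + Z.of_nat k.
  move=> kn; have := grow 0%N k ltac:(lia); have := grow k n ltac:(lia).
  by have := w_addN 0; rewrite /= => w_n; lia.
have w0 : w 0 = 0.
  have shifted : window_sum n w 1 = window_sum n id (1 + w 0).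
    apply: eq_bigr => j _; have j_lt := ltn_ord j.
    by rewrite (_ : 1 + _ = Z.of_nat j.+1) ?wE /id; lia.
  by have := affine_perm_window_sum _ w_perm; rewrite shifted window_sum_add //; nia.
move=> z; have [j [q [j_lt ->]]] := window_decomp n 0 z ltac:(lia).
by rewrite (periodic_addmN _ _ w_addN) /= wE; lia.
Qed.

Lemma affine_perm_descent_or_id w : is_affine_perm n w ->
  (exists2 i, (i < n)%N & w (Z.of_nat i + 1) < w (Z.of_nat i)) \/ w =1 id.
Proof.
move=> w_perm; have [w_inj _] := w_perm.
case: (boolP (has (fun i => w (Z.of_nat i + 1) <? w (Z.of_nat i)) (iota 0 n))).
  by move=> /hasP [i]; rewrite mem_iota => i_lt /Z.ltb_lt desc; left; exists i.
move=> /hasPn asc; right; apply: affine_perm_ascending_id => // i i_lt.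
have /negbTE/Z.ltb_ge := asc i ltac:(by rewrite mem_iota).
have : w (Z.of_nat i) <> w (Z.of_nat i + 1) by move/w_inj; lia.
lia.
Qed.

Lemma factorization_inversion_number w : is_affine_perm n w ->
  exists l, is_factorization n w l /\ length l = inversion_number n w.
Proof.
suff key k : forall v, is_affine_perm n v -> inversion_number n v = k ->
    exists l, is_factorization n v l /\ length l = k.
  by move=> w_perm; exact: key.
elim: k => [|k IHk] {}w w_perm w_inv;
  case: (affine_perm_descent_or_id _ w_perm) => [[i i_lt desc] | w_id].
- have := inversion_number_gen _ n_ge2 _ _ (affine_perm_injection _ _ w_perm) i_lt.
  by case: Z.ltb_spec; lia.
- by exists [::]; do !split.
- have := inversion_number_gen _ n_ge2 _ _ (affine_perm_injection _ _ w_perm) i_lt.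
  case: Z.ltb_spec => [|_]; first lia.
  rewrite w_inv => -[] /(IHk _ (is_affine_perm_gen _ _ w_perm i_lt)) [l [[l_lt l_fact] <-]].
  exists (l ++ [:: i]); split; last by rewrite length_app /=; lia.
  split; first by apply/Forall_app; split; [|constructor; [apply/ltP|]].
  by move=> z; rewrite gen_prod_rcons /= -l_fact /= gen_involutive.
- by move: w_inv; rewrite (inversion_number_ext _ _ _ w_id) inversion_number_id.
Qed.

Lemma coxeter_length_inversion_number w : is_affine_perm n w ->
  coxeter_length_is n w (inversion_number n w).
Proof.
move=> w_perm; split; first exact: factorization_inversion_number.
move=> l [l_lt l_fact].
by rewrite (inversion_number_ext _ _ _ l_fact); apply/leP/inversion_number_gen_prod_le.
Qed.

End AffinePermutations.

Lemma In_Zbetween x a b : List.In x (Zbetween a b) -> a < x < b.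
Proof. by rewrite /Zbetween => /in_map_iff [t [<- /in_seq t_in]]; lia. Qed.

Lemma Zbetween_split a b c : a < b < c -> Zbetween a c = Zbetween a b ++ b :: Zbetween b c.
Proof.
move=> abc; rewrite /Zbetween !List_map_seq.
rewrite (_ : Z.to_nat (c - a - 1) = Z.to_nat (b - a - 1) + (Z.to_nat (c - b - 1)).+1)%N;
  last lia.
rewrite iotaD map_cat /=; congr (_ ++ _ :: _); first lia.
rewrite -[(0 + _).+1]addn0 iotaDl -map_comp.
by apply: eq_map => t /=; lia.
Qed.

Lemma count_Zbetween_congruent (n : nat) a b : (0 < n)%N -> a < b ->
  count (fun x => (a - x) mod Z.of_nat n =? 0) (Zbetween a b) =
  Z.to_nat ((b - a - 1) / Z.of_nat n).
Proof.
move=> n_gt0 ab; rewrite /Zbetween List_map_seq count_map.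
set M := Z.to_nat (b - a - 1).
transitivity (\sum_(0 <= t < M) (n %| t.+1)).
  rewrite -sum1_count big_mkcond /index_iota subn0; apply: eq_bigr => t _ /=.
  by rewrite (_ : a - _ = - Z.of_nat t.+1) ?opp_mod_eqb0_dvdn //; lia.
have -> : Z.to_nat ((b - a - 1) / Z.of_nat n) = (M %/ n)%N.
  have := Z.div_mod (b - a - 1) (Z.of_nat n) ltac:(lia).
  have := Z.mod_pos_bound (b - a - 1) (Z.of_nat n) ltac:(lia).
  have := Z.div_pos (b - a - 1) (Z.of_nat n) ltac:(lia) ltac:(lia).
  move=> q_ge0 r_bd x_eq.
  rewrite /M (_ : Z.to_nat (b - a - 1) = Z.to_nat ((b - a - 1) / Z.of_nat n) * n
                               + Z.to_nat ((b - a - 1) mod Z.of_nat n))%N; last nia.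
  by rewrite divnMDl // divn_small ?addn0; lia.
by rewrite divn_count_dvd big_add1.
Qed.

Section Gaps.
Variables (n : nat) (w : Z -> Z).
Hypotheses (n_ge2 : (2 <= n)%N) (w_perm : is_affine_perm n w) (w_incr : window_increasing n w).
Local Notation N := (Z.of_nat n).
Local Notation v k := (w (Z.of_nat k)).
Local Notation congruent c := (fun x => (c - x) mod N =? 0).

Lemma window_lt j k : (1 <= j)%N -> (j < k)%N -> (k <= n)%N -> v j < v k.
Proof.
move=> j_ge1; elim: k => [//|k IHk] jk kn.
have := w_incr k ltac:(lia) ltac:(lia); rewrite (_ : Z.of_nat k + 1 = Z.of_nat k.+1); last lia.
by case: (eqVneq j k) => [-> //|ne]; have := IHk ltac:(lia) ltac:(lia); lia.
Qed.

Lemma window_le j k : (1 <= j)%N -> (j <= k)%N -> (k <= n)%N -> v j <= v k.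
Proof.
move=> j_ge1; rewrite leq_eqVlt => /predU1P [->|jk] kn; first lia.
by have := window_lt j k; lia.
Qed.

Lemma window_residue x : exists2 k, (1 <= k <= n)%N & congruent (v k) x.
Proof.
have [_ [w_surj [w_addN _]]] := w_perm; have [z wz] := w_surj x.
have [j [q [j_lt z_eq]]] := window_decomp n 1 z ltac:(lia).
exists j.+1; first lia.
apply/Z.eqb_spec; rewrite -wz z_eq (periodic_addmN _ _ w_addN).
rewrite (_ : 1 + _ = Z.of_nat j.+1); last lia.
by rewrite Z.sub_add_distr Z.sub_diag Z.sub_0_l -Z.mul_opp_l Z_mod_mult.
Qed.

Lemma window_residue_unique x k k' : (1 <= k <= n)%N -> (1 <= k' <= n)%N ->
  congruent (v k) x -> congruent (v k') x -> k = k'.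
Proof.
move=> k_in k'_in /Z.eqb_spec /Z.mod_divide kx /Z.eqb_spec /Z.mod_divide k'x.
have /(affine_injection_mod _ _ _ _ (ltnW n_ge2) (affine_perm_injection _ _ w_perm)) :
    (v k - v k') mod N = 0.
  apply/Z.mod_divide; first lia.
  rewrite (_ : _ - _ = (v k - x) - (v k' - x)); last lia.
  by apply: Z.divide_sub_r; [apply: kx | apply: k'x]; lia.
move/Z.mod_divide => [|q kq]; first lia.
by have [q_neg|[q0|q_pos]] := Z.lt_total q 0; nia.
Qed.

Lemma window_beadb i x k : (1 <= i < n)%N -> v i < x < v i.+1 ->
  (1 <= k <= n)%N -> congruent (v k) x -> is_beadb n w x = (i < k)%N.
Proof.
move=> i_in x_in k_in kx; case: (ltnP i k) => [ik|ki].
  apply/existsb_exists; exists k; split; first by apply/in_seq; lia.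
  by rewrite kx andbT; apply/Z.leb_le; have := window_le i.+1 k; lia.
apply/negbTE/negP => /existsb_exists [j [/in_seq j_in /andP [/Z.leb_le xj jx]]].
have jk := window_residue_unique x j k ltac:(lia) k_in jx kx; subst j.
by have := window_le k i; lia.
Qed.

Lemma gap_window i : (1 <= i < n)%N ->
  gap n w i = \sum_(1 <= k < i.+1) count (congruent (v k)) (Zbetween (v i) (v i.+1)).
Proof.
move=> i_in; rewrite /gap length_filter_count (_ : Z.of_nat i + 1 = Z.of_nat i.+1); last lia.
apply: count_sum_pointwise => x /In_Zbetween x_in.
have [k0 k0_in k0x] := window_residue x.
rewrite (window_beadb i x k0) //.
transitivity (\sum_(1 <= k < i.+1 | k == k0) 1)%N.
  by rewrite big_nat1_eq -leqNgt ltnS (_ : 0 < k0)%N /=; [case: (k0 <= i)%N | lia].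
rewrite big_mkcond; apply: eq_big_nat => k k_in; case: (eqVneq k k0) => [->|ne].
  by rewrite k0x.
case kx: (_ =? 0) => //; case/eqP: ne; apply: (window_residue_unique x) => //; lia.
Qed.

Lemma count_congruent_chain k j : (1 <= k)%N -> (k < j)%N -> (j <= n)%N ->
  count (congruent (v k)) (Zbetween (v k) (v j)) =
  \sum_(k <= i < j) count (congruent (v k)) (Zbetween (v i) (v i.+1)).
Proof.
move=> k_ge1; elim: j => [//|j IHj] kj jn.
case: (eqVneq k j) => [<-|ne]; first by rewrite big_nat1.
rewrite big_nat_recr -?IHj; try lia.
have kj_lt := window_lt k j k_ge1 ltac:(lia) ltac:(lia).
have := window_lt j j.+1 ltac:(lia) ltac:(lia) jn => j_lt.
rewrite (Zbetween_split (v k) (v j)); last lia.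
rewrite count_cat /=; have -> // : ((v k - v j) mod N =? 0) = false.
apply/negbTE/negP => kj'; case/eqP: ne; apply: (window_residue_unique (v j)) => //; try lia.
by rewrite Z.sub_diag.
Qed.

Lemma affine_inv_window j k : (j < n)%N -> (k < n)%N ->
  affine_inv n w (1 + Z.of_nat j) (1 + Z.of_nat k) =
  if (k < j)%N then Z.to_nat ((v j.+1 - v k.+1 - 1) / N) else 0%N.
Proof.
move=> j_lt k_lt; rewrite /affine_inv /floor_count.
rewrite (_ : 1 + _ - _ = Z.of_nat j - Z.of_nat k) ?window_div //; last lia.
rewrite (_ : 1 + Z.of_nat j = Z.of_nat j.+1) 1?(_ : 1 + Z.of_nat k = Z.of_nat k.+1); try lia.
case: (ltnP k j) => [kj | jk]; first by rewrite ltnNge (ltnW kj) /= Z.sub_0_r.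
have : (v j.+1 - v k.+1 - 1) / N < 0.
  by apply: Z.div_lt_upper_bound; have := window_le j.+1 k.+1; lia.
by case: ltnP; lia.
Qed.

Lemma inversion_number_window :
  inversion_number n w = \sum_(1 <= j < n.+1) \sum_(1 <= k < j) Z.to_nat ((v j - v k - 1) / N).
Proof.
rewrite /inversion_number /window_inv big_add1 succnK big_mkord; apply: eq_bigr => j _.
rewrite big_add1 succnK (big_nat_widen _ _ n); last exact: ltnW.
rewrite [RHS]big_mkcond [RHS]big_mkord; apply: eq_bigr => k _.
by rewrite affine_inv_window.
Qed.

Lemma inversion_number_weighted_gap_sum : inversion_number n w = weighted_gap_sum n w.
Proof.
pose c i k := count (congruent (v k)) (Zbetween (v i) (v i.+1)).
transitivity (\sum_(1 <= i < n) (n - i) * \sum_(1 <= k < i.+1) c i k)%N.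
  rewrite inversion_number_window -sum_weighted_triangle.
  apply: eq_big_nat => j j_in; apply: eq_big_nat => k k_in.
  rewrite -count_congruent_chain ?count_Zbetween_congruent //; try lia.
  by apply: window_lt; lia.
rewrite /weighted_gap_sum; symmetry; etransitivity; first exact: (fold_right_big _ _ addn).
rewrite (_ : (n - 1)%coq_nat = n.-1); last lia.
rewrite big_add1 big_mkord; apply: eq_bigr => i _.
cbv beta; rewrite /c add1n gap_window; last by have := ltn_ord i; lia.
by rewrite -multE -minusE.
Qed.

End Gaps.

Theorem mainTheorem1 (n : nat) (w : Z -> Z) :
  (2 <= n)%coq_nat ->
  is_affine_perm n w ->
  window_increasing n w ->
  coxeter_length_is n w (weighted_gap_sum n w).
Proof.
move=> /leP n_ge2 w_perm w_incr.
rewrite -inversion_number_weighted_gap_sum //.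
exact: coxeter_length_inversion_number.
Qed.
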